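(* There exists a function $f:\mathbb{N}^3\to\mathbb{N}$ such that the following holds for all integers $D,k\ge 1$ and $b\ge 0$. Let $T$ be a rooted tree of maximum degree at most $D$ satisfying $b(T)\le b$. If every root-leaf path in $T$ contains less than $k$ vertices with at least two children, then $T$ has at most $f(D,b,k)$ leaves.
   Context: For a rooted tree $T$, $b(T)$ denotes the maximum depth of a rooted complete binary tree which appears in $T$ as a rooted minor, where the depth of a rooted tree is the maximum number of edges of a root-leaf path. *)

From Stdlib Require Import List Permutation Relation_Operators.
From mathcomp Require Import all_boot.
Set Implicit Arguments. Unset Strict Implicit. Unset Printing Implicit Defensive.

(* Finite rooted trees: a node with its (finite) list of child subtrees.
   The order of children is irrelevant (rooted minors allow permutation). *)
Inductive rtree : Type := Node of seq rtree.

Definition children (t : rtree) : seq rtree := let: Node cs := t in cs.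

(* Maximum (graph) degree at most D: the root has degree = #children,
   every other vertex has degree = #children + 1 (the edge to its parent). *)
Fixpoint deg_ok (D : nat) (isroot : bool) (t : rtree) : bool :=
  let: Node cs := t in
  (size cs + (if isroot then 0 else 1) <= D) && all (deg_ok D false) cs.

Definition max_degree_le (D : nat) (t : rtree) : bool := deg_ok D true t.

Fixpoint nleaves (t : rtree) : nat :=
  let: Node cs := t in
  if cs is [::] then 1 else sumn (map nleaves cs).

(* All root-leaf paths, each listed as the sequence of subtrees rooted at
   the vertices of the path (from the root down to a leaf). *)
Fixpoint rpaths (t : rtree) : seq (seq rtree) :=
  let: Node cs := t in
  if cs is [::] then [:: [:: t]]
  else flatten (map (fun c => map (cons t) (rpaths c)) cs).

Definition branching (t : rtree) : bool := 2 <= size (children t).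

Inductive rstep : rtree -> rtree -> Prop :=
| rs_del cs1 c cs2 :
    rstep (Node (cs1 ++ c :: cs2)) (Node (cs1 ++ cs2))
| rs_contr cs1 ds cs2 :
    rstep (Node (cs1 ++ Node ds :: cs2)) (Node (cs1 ++ ds ++ cs2))
| rs_perm cs cs' : Permutation cs cs' -> rstep (Node cs) (Node cs')
| rs_in cs1 c c' cs2 : rstep c c' ->
    rstep (Node (cs1 ++ c :: cs2)) (Node (cs1 ++ c' :: cs2)).

Definition rminor (H T : rtree) : Prop := clos_refl_trans rtree rstep T H.

Fixpoint cbt (d : nat) : rtree :=
  if d is d'.+1 then Node [:: cbt d'; cbt d'] else Node [::].

Definition b_le (T : rtree) (b : nat) : Prop :=
  forall d, rminor (cbt d) T -> d <= b.

(* Along any root-leaf path the branching vertices can be counted, and the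
   largest such count, the branching height h(T), is attained by some path;
   the hypothesis therefore gives h(T) < k.  A vertex with at most one child
   does not multiply the number of leaves, and a branching vertex has at most
   D children, so T has at most D ^ h(T) <= D ^ (k - 1) leaves.  The bound
   does not depend on b. *)

From Stdlib Require Import List.
From mathcomp Require Import all_boot.

Set Implicit Arguments.
Unset Strict Implicit.
Unset Printing Implicit Defensive.

Fixpoint rtree_ind_In (P : rtree -> Prop)
    (IH : forall cs, (forall c, List.In c cs -> P c) -> P (Node cs))
    (t : rtree) : P t :=
  match t with Node cs =>
  IH cs ((fix in_children (s : seq rtree) : forall c, List.In c s -> P c :=
            match s with
            | [::] => fun c (cs_c : List.In c [::]) => False_ind _ cs_c
            | c' :: s' => fun c cs_c =>
                match cs_c with
                | or_introl e => eq_ind c' P (rtree_ind_In IH c') c e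
                | or_intror s'_c => in_children s' c s'_c
                end
            end) cs) end.

Lemma all_In (T : Type) (a : pred T) s x : all a s -> List.In x s -> a x.
Proof. by elim: s => //= y s IH /andP[a_y /IH a_s] [<- | /a_s]. Qed.

Lemma In_flatten_map_cons (A : Type) (f : A -> seq (seq A)) (t a : A) s q :
  List.In a s -> List.In q (f a) ->
  List.In (t :: q) (flatten (map (fun c => map (cons t) (f c)) s)).
Proof.
elim: s => //= a' s IH [<- | s_a] fa_q; apply: in_or_app.
  by left; apply: in_map.
by right; apply: IH.
Qed.

Lemma foldr_maxn_map_ub (T : Type) (f : T -> nat) (s : seq T) x :
  List.In x s -> f x <= foldr maxn 0 (map f s).
Proof.
elim: s => //= y s IH [<- | s_x]; first exact: leq_maxl.
exact: leq_trans (IH s_x) (leq_maxr _ _).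
Qed.

Lemma foldr_maxn_map_attained (T : Type) (f : T -> nat) (s : seq T) :
  0 < size s -> exists2 x, List.In x s & foldr maxn 0 (map f s) = f x.
Proof.
elim: s => // x [_ _ | y s IH _]; first by exists x; [left | rewrite /= maxn0].
have [z s_z max_z] := IH isT.
rewrite /= in max_z *; rewrite max_z.
(* [leqP] also rewrites [maxn (f x) (f z)] in the goal. *)
case: (leqP (f z) (f x)) => _.
  by exists x; [left |].
by exists z; [right |].
Qed.

Lemma sumn_map_le_size_mul (T : Type) (f : T -> nat) (s : seq T) M :
  (forall x, List.In x s -> f x <= M) -> sumn (map f s) <= size s * M.
Proof.
elim: s => //= x s IH f_le; rewrite mulSn.
by rewrite leq_add ?f_le ?IH //; [left | move=> y s_y; apply: f_le; right].
Qed.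

Lemma In_rpaths_Node c cs q :
  List.In c cs -> List.In q (rpaths c) -> List.In (Node cs :: q) (rpaths (Node cs)).
Proof. by case: cs => [// | c' cs]; apply: In_flatten_map_cons. Qed.

Fixpoint branch_height (t : rtree) : nat :=
  let: Node cs := t in branching t + foldr maxn 0 (map branch_height cs).

Lemma branch_height_Node cs :
  branch_height (Node cs) = branching (Node cs) + foldr maxn 0 (map branch_height cs).
Proof. by []. Qed.

Lemma branch_height_rpath t :
  exists2 p, List.In p (rpaths t) & count branching p = branch_height t.
Proof.
elim/rtree_ind_In: t => -[| c0 cs0] IH; first by exists [:: Node [::]]; [left |].
set cs := c0 :: cs0.
have [c cs_c max_c] := @foldr_maxn_map_attained _ branch_height cs isT.
have [q c_q count_q] := IH c cs_c.
exists (Node cs :: q); first exact: In_rpaths_Node cs_c c_q.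
by rewrite branch_height_Node max_c -count_q.
Qed.

Lemma size_mul_pow_le D cs m :
  size cs <= D -> size cs * D ^ m <= D ^ (branching (Node cs) + m).
Proof.
rewrite /branching /=; case: (leqP 2 (size cs)) => [_ | lt_two] cs_D.
  by rewrite add1n expnS leq_mul2r cs_D orbT.
by rewrite add0n -[leqRHS]mul1n leq_mul2r -ltnS lt_two orbT.
Qed.

Lemma nleaves_le_pow_branch_height D r t :
  deg_ok D r t -> nleaves t <= D ^ branch_height t.
Proof.
elim/rtree_ind_In: t r => -[| c0 cs0] IH r; first by [].
set cs := c0 :: cs0; rewrite branch_height_Node => /andP[deg_root deg_cs].
have cs_D : size cs <= D := leq_trans (leq_addr _ _) deg_root.
apply: leq_trans _ (size_mul_pow_le _ cs_D).
apply: sumn_map_le_size_mul => c cs_c.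
apply: leq_trans (IH c cs_c false _) _; first exact: all_In deg_cs cs_c.
by rewrite leq_pexp2l ?foldr_maxn_map_ub // (leq_trans _ cs_D).
Qed.

Theorem lemma15 :
  exists f : nat -> nat -> nat -> nat,
    forall (D k b : nat), 1 <= D -> 1 <= k ->
    forall T : rtree,
      max_degree_le D T ->
      b_le T b ->
      (forall p, List.In p (rpaths T) -> count branching p < k) ->
      nleaves T <= f D b k.
Proof.
exists (fun D _ k => D ^ k.-1) => D k b D_pos k_pos T deg_T _ few_branchings.
apply: leq_trans (nleaves_le_pow_branch_height deg_T) _.
rewrite leq_pexp2l // -ltnS prednK //.
have [p T_p <-] := branch_height_rpath T.
exact: few_branchings.
Qed.
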